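(* Let $d\ge2$, $p\ge1$, $k\ge1$. Define $\psi:\mathcal{C}_k^{(d)}\to\mathbb{R}$ by $$\psi:=\frac{1}{dk+1}\sum_{j\ge p}\ \sum_{v\in\{1,\dots,d\}^j}\ \sum_{\substack{\mathcal{S}=\mathrm{Sh}(T;v_0,\dots,v_p=v)\\\text{for some }T\in\mathcal{C}_k^{(d)}}}\mathbf{1}_{\mathcal{S}},$$ where for each code $v$ the inner sum is over the distinct sets $\mathcal{S}$ arising as shuffle classes of the path of length $p$ ending at the vertex with code $v$ in some tree $T\in\mathcal{C}_k^{(d)}$ containing $v$. Then $\psi$ lies in the span of the length-$p$ shuffle indicators, and $$\sup_{T\in\mathcal{C}_k^{(d)}}|\psi(T)-1|\le\frac{C_{d,p}}{dk+1},\qquad C_{d,p}:=\frac{d^p-1}{d-1}.$$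
   Context: A $d$-Catalan tree is a rooted planar tree in which each vertex has $0$ or $d$ children; $\mathcal{C}_k^{(d)}$ is the set of those with $k$ internal vertices (so $dk+1$ vertices). Vertices are coded by words in $\bigcup_{j\ge0}\{1,\dots,d\}^j$: the root is the empty word and the children of the vertex with code $u$ are $u1,\dots,ud$ from left to right; the code length is the height. For a path $(v_0,\dots,v_p)$ ($v_i$ a child of $v_{i-1}$) in $T$, $\mathrm{Sh}(T;v_0,\dots,v_p)$ is the set of trees in $\mathcal{C}_k^{(d)}$ obtained by rearranging the $(d-1)p$ subtrees subtended by the siblings of $v_1,\dots,v_p$ among those positions; these are the length-$p$ shuffle classes, with indicators $\mathbf{1}_{\mathcal{S}}$. *)

From HB Require Import structures.
From mathcomp Require Import all_boot all_order all_algebra all_fingroup.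
Set Implicit Arguments. Unset Strict Implicit. Unset Printing Implicit Defensive.
Import Order.TTheory GRing.Theory Num.Theory.

(* Vertex codes: words over the alphabet 'I_d (letter b : 'I_d stands for the
   paper's letter b+1 in {1,...,d}) of length at most k.  A d-Catalan tree with
   k internal vertices has height at most k, so all of its vertex codes live in
   the finite type [code d k]; a tree is represented by its set of vertex codes. *)
Definition code (d k : nat) := {n : 'I_k.+1 & n.-tuple 'I_d}.

Definition cword d k (c : code d k) : seq 'I_d := val (tagged c).

Definition inT d k (T : {set code d k}) (s : seq 'I_d) : bool :=
  [exists c in T, cword c == s].

Definition all_children d k (T : {set code d k}) (c : code d k) : bool :=
  [forall b : 'I_d, inT T (rcons (cword c) b)].
Definition no_children d k (T : {set code d k}) (c : code d k) : bool :=
  [forall b : 'I_d, ~~ inT T (rcons (cword c) b)].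

Definition dcatalan d k (T : {set code d k}) : bool :=
  [&& inT T [::],
      [forall c in T, forall m : 'I_k.+1, inT T (take m (cword c))],
      [forall c in T, all_children T c || no_children T c] &
      #|[set c in T | all_children T c]| == k].

(* positions of the siblings of v_1, ..., v_p on the path (v_0,...,v_p = v),
   where v_0 is the ancestor of v at height |v| - p *)
Definition is_pos d k (v : code d k) (p : nat) (c : code d k) : bool :=
  let w := cword v in
  [exists i : 'I_k, exists b : 'I_d,
     [&& size w - p <= i, i < size w, b != nth b w i &
         cword c == rcons (take i w) b]].

Definition pos d k (v : code d k) (p : nat) : {set code d k} :=
  [set c | is_pos v p c].

(* membership of the word x in the tree obtained from T by putting at each
   sibling position q the subtree of T rooted at s q *)
Definition shuffled d k (v : code d k) (p : nat) (T : {set code d k})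
    (s : {perm code d k}) (x : seq 'I_d) : bool :=
  if [pick q in pos v p | prefix (cword q) x] is Some q
  then inT T (cword (s q) ++ drop (size (cword q)) x)
  else inT T x.

Definition Sh d k (T : {set code d k}) (v : code d k) (p : nat)
    : {set {set code d k}} :=
  [set T' | dcatalan T' &&
     [exists s : {perm code d k},
        perm_on (pos v p) s &&
        [forall c, (c \in T') == shuffled v p T s (cword c)]]].

Definition trees_with d k (v : code d k) : {set {set code d k}} :=
  [set T | dcatalan T & v \in T].

Definition classes_at d k (v : code d k) (p : nat)
    : {set {set {set code d k}}} :=
  [set Sh T v p | T in trees_with v].

Definition shuffle_classes d k (p : nat) : {set {set {set code d k}}} :=
  \bigcup_(v : code d k | p <= size (cword v)) classes_at v p.

Local Open Scope ring_scope.

Definition psi (R : numFieldType) d k (p : nat) (T : {set code d k}) : R :=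
  ((d * k + 1)%N%:R)^-1 *
  \sum_(v : code d k | (p <= size (cword v))%N)
     \sum_(S in classes_at v p) (T \in S)%:R.

From mathcomp Require Import all_boot all_order all_algebra all_fingroup.
From mathcomp Require Import zify.
Import Order.TTheory GRing.Theory Num.Theory.
Set Implicit Arguments. Unset Strict Implicit. Unset Printing Implicit Defensive.

(* Rearranging the sibling subtrees along the path ending at v never moves v,
   and rearrangements compose, so the shuffle classes at v of the trees
   containing v partition those trees: a tree T lies in exactly one class at v
   when v is a vertex of T, and in none otherwise.  Hence (dk+1) psi(T) counts
   the vertices of T of height at least p, and 1 - psi(T) is the proportion,
   among the dk+1 vertices of T, of those of height less than p, of which there
   are at most 1 + d + ... + d^(p-1).
   Since codes have length at most k, composing rearrangements needs that no
   shuffled word grows beyond height k; this holds because two branches of a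
   tree that diverge at height j carry |a| + |b| - j - 1 distinct internal
   vertices. *)

Section Codes.
Variables d k : nat.
Implicit Types (T : {set code d k}) (c : code d k) (w : seq 'I_d).

Lemma size_cword c : size (cword c) <= k.
Proof. by case: c => n t; rewrite /cword /= size_tuple -ltnS. Qed.

Lemma cword_inj : injective (@cword d k).
Proof.
case=> [n1 t1] [n2 t2]; rewrite /cword /= => E.
have E12 : n1 = n2 by apply: val_inj; rewrite /= -(size_tuple t1) -(size_tuple t2) E.
by subst n2; congr existT; apply: val_inj.
Qed.

Definition root_code : code d k :=
  Tagged (fun n : 'I_k.+1 => n.-tuple 'I_d) ([tuple] : (@ord0 k).-tuple _).

(* [root_code] is a junk value for words longer than k. *)
Definition code_of_word w : code d k := odflt root_code [pick c | cword c == w].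

Lemma code_of_wordK w : size w <= k -> cword (code_of_word w) = w.
Proof.
rewrite -ltnS => wk; rewrite /code_of_word; case: pickP => [c /eqP // | none].
pose c := Tagged (fun n : 'I_k.+1 => n.-tuple 'I_d) (in_tuple w : (Ordinal wk).-tuple _).
by have := none c; rewrite eqxx.
Qed.

Lemma cwordK : cancel (@cword d k) code_of_word.
Proof. by move=> c; apply: cword_inj; rewrite code_of_wordK ?size_cword. Qed.

Lemma inT_cword T c : inT T (cword c) = (c \in T).
Proof.
apply/existsP/idP => [[c' /andP[c'T /eqP/cword_inj <-]] // | cT].
by exists c; rewrite cT eqxx.
Qed.

Lemma inTE T w : inT T w = (size w <= k) && (code_of_word w \in T).
Proof.
apply/idP/andP => [/existsP[c /andP[cT /eqP <-]] | [wk]].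
  by rewrite size_cword cwordK.
by rewrite -inT_cword code_of_wordK.
Qed.

Lemma inT_size T w : inT T w -> size w <= k.
Proof. by rewrite inTE => /andP[]. Qed.

Lemma inT_take_size T w m : inT T w -> size (take m w) <= k.
Proof. by move/inT_size; apply: leq_trans; rewrite size_take_min geq_minr. Qed.

Lemma code_of_take_inj T w : inT T w ->
  {in [pred m | m <= size w] &, injective (fun m => code_of_word (take m w) : code d k)}.
Proof.
move=> Tw m n mw nw /(congr1 (@cword d k)).
by rewrite !code_of_wordK ?(inT_take_size _ Tw) // => /(congr1 size); rewrite !size_takel.
Qed.

Lemma card_codes_of_size (d_gt0 : 0 < d) j :
  #|[set c : code d k | size (cword c) == j]| <= d ^ j.
Proof.
pose letters (c : code d k) := [ffun i : 'I_j => nth (Ordinal d_gt0) (cword c) i].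
rewrite -(@card_in_imset _ _ letters); last first.
  move=> c1 c2; rewrite !inE => /eqP s1 /eqP s2 E; apply: cword_inj.
  apply: (@eq_from_nth _ (Ordinal d_gt0)) => [|i]; first by rewrite s1 s2.
  by rewrite s1 => ij; have := congr1 (fun f : {ffun _} => f (Ordinal ij)) E; rewrite !ffunE.
by apply: leq_trans (max_card _) _; rewrite card_ffun !card_ord.
Qed.

Lemma card_short_codes (d_gt0 : 0 < d) p :
  #|[set c : code d k | size (cword c) < p]| <= \sum_(j < p) d ^ j.
Proof.
elim: p => [|p IHp].
  by rewrite big_ord0 leqn0 cards_eq0; apply/eqP/setP => c; rewrite !inE.
have -> : [set c : code d k | size (cword c) < p.+1] =
          [set c | size (cword c) < p] :|: [set c | size (cword c) == p].
  by apply/setP => c; rewrite !inE ltnS leq_eqVlt orbC.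
rewrite big_ord_recr /= (leq_trans (leq_card_setU _ _)) // leq_add //.
exact: card_codes_of_size.
Qed.

End Codes.
Arguments code_of_word {d k} w.

Section Trees.
Variables d k : nat.
Implicit Types (T : {set code d k}) (c : code d k) (w : seq 'I_d).

Definition internal T := [set c in T | all_children T c].

Lemma card_internal T : dcatalan T -> #|internal T| = k.
Proof. by case/and4P=> _ _ _ /eqP. Qed.

Lemma inT_take T w m : dcatalan T -> inT T w -> inT T (take m w).
Proof.
case/and4P=> _ /forall_inP closed _ _; rewrite inTE => /andP[wk wT].
have [mk | km] := ltnP m k.+1.
  by have /forallP/(_ (Ordinal mk)) := closed _ wT; rewrite code_of_wordK.
by rewrite take_oversize ?inTE ?wk // (leq_trans wk) // ltnW.
Qed.

Lemma internal_take T w m : dcatalan T -> inT T w -> m < size w ->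
  code_of_word (take m w) \in internal T.
Proof.
move=> dT Tw mw; have Tm := inT_take m dT Tw; have mk := inT_size Tm.
have [_ _ /forall_inP full _] := and4P dT.
have cT : code_of_word (take m w) \in T by rewrite -inT_cword code_of_wordK.
rewrite inE cT; case/orP: (full _ cT) => // /forallP no_child.
have x0 : 'I_d by case: w mw {Tw Tm mk cT no_child} => // x0.
have := no_child (nth x0 w m).
by rewrite code_of_wordK // -take_nth // (inT_take _ dT Tw).
Qed.

(* The proper prefixes of a, and those of b longer than j, are distinct
   internal vertices. *)
Lemma branch_bound T a b j z : dcatalan T -> inT T a -> inT T b ->
  j < size b -> nth z a j != nth z b j -> size a + (size b - j.+1) <= k.
Proof.
move=> dT Ta Tb jb ab.
pose pref w lo := [seq code_of_word (take m w) | m <- iota lo (size w - lo)] : seq (code d k).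
have pref_uniq w lo : inT T w -> uniq (pref w lo).
  move=> Tw; rewrite map_inj_in_uniq ?iota_uniq // => m n.
  rewrite !mem_iota => /andP[lm mw] /andP[ln nw]; apply: (code_of_take_inj Tw); rewrite inE; lia.
have pref_internal w lo : inT T w -> {subset pref w lo <= enum (internal T)}.
  move=> Tw x /mapP[m]; rewrite mem_iota => /andP[lm mw] ->; rewrite mem_enum.
  by apply: internal_take => //; lia.
have pref_disjoint : ~~ has (mem (pref a 0)) (pref b j.+1).
  apply/hasPn => x /mapP[n]; rewrite mem_iota => /andP[jn nb] ->; apply/mapP => -[m].
  rewrite mem_iota => /andP[_ ma] /(congr1 (@cword d k)).
  rewrite !code_of_wordK ?(inT_take_size _ Ta) ?(inT_take_size _ Tb) // => E.
  have Enm : n = m by have := congr1 size E; rewrite !size_takel //; lia.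
  have := congr1 (nth z ^~ j) E; rewrite /= !nth_take; [|lia|lia].
  by move/eqP; rewrite eq_sym (negbTE ab).
have pref_all_uniq : uniq (pref a 0 ++ pref b j.+1).
  by rewrite cat_uniq pref_disjoint !pref_uniq.
have pref_all_internal : {subset pref a 0 ++ pref b j.+1 <= enum (internal T)}.
  by move=> x; rewrite mem_cat => /orP[]; apply: pref_internal.
have := uniq_leq_size pref_all_uniq pref_all_internal.
by rewrite size_cat !size_map !size_iota subn0 -cardE card_internal.
Qed.

Definition child c (b : 'I_d) : code d k := code_of_word (rcons (cword c) b).

Lemma internal_child T c b : c \in internal T -> inT T (rcons (cword c) b).
Proof. by rewrite inE => /andP[_ /forallP]. Qed.

Lemma nonroot_children T : dcatalan T ->
  T :\ code_of_word [::] = [set child cb.1 cb.2 | cb in setX (internal T) [set: 'I_d]].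
Proof.
move=> dT; apply/setP => x; rewrite !inE; apply/andP/imsetP => [[x_nonroot xT] | [[c b]]].
  case/lastP E: (cword x) => [|y b].
    by move: x_nonroot; rewrite -(cwordK x) E eqxx.
  have Tx : inT T (cword x) by rewrite inT_cword.
  have yx : size y < size (cword x) by rewrite E size_rcons.
  have yI := internal_take dT Tx yx; rewrite E -cats1 take_size_cat // in yI.
  have yk : size y <= k by rewrite ltnW // (leq_trans yx) ?size_cword.
  exists (code_of_word y, b); first by rewrite in_setX yI in_setT.
  by rewrite /child /= code_of_wordK // -E cwordK.
rewrite in_setX in_setT andbT /= => /(internal_child b) Tcb ->.
have cbk := inT_size Tcb.
split; last by rewrite -inT_cword code_of_wordK.
by apply/eqP => /(congr1 (@cword d k)); rewrite !code_of_wordK //; case: (cword c).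
Qed.

Lemma card_dcatalan T : dcatalan T -> #|T| = d * k + 1.
Proof.
move=> dT; rewrite (cardsD1 (code_of_word [::])) nonroot_children //.
have rootT : code_of_word [::] \in T by have [+ _ _ _] := and4P dT; rewrite inTE.
rewrite rootT card_in_imset ?cardsX ?card_internal ?cardsT ?card_ord 1?addnC 1?mulnC //.
move=> [c1 b1] [c2 b2]; rewrite !in_setX !in_setT !andbT.
move=> /(internal_child b1) T1 /(internal_child b2) T2.
move/(congr1 (@cword d k)); rewrite /child /= !code_of_wordK ?(inT_size T1) ?(inT_size T2) //.
by case/rcons_inj => /cword_inj -> ->.
Qed.

Lemma card_dcatalan_split T p : dcatalan T ->
  (#|[set v in T | p <= size (cword v)]| + #|[set v in T | size (cword v) < p]|
   = d * k + 1)%N.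
Proof.
move=> dT; rewrite -(card_dcatalan dT) -(cardsID [set v | p <= size (cword v)] T).
by congr (_ + _)%N; apply: eq_card => v; rewrite !inE // ltnNge andbC.
Qed.

End Trees.

Section Positions.
Variables (d k : nat) (v : code d k) (p : nat).
Implicit Types (T : {set code d k}) (q u : code d k) (x r : seq 'I_d).

Lemma posP q : q \in pos v p -> exists i b,
  [/\ i < size (cword v), b != nth b (cword v) i & cword q = rcons (take i (cword v)) b].
Proof. by rewrite inE => /existsP[i /existsP[b /and4P[_ iv vb /eqP ->]]]; exists i, b. Qed.

Lemma pos_not_prefix q : q \in pos v p -> ~~ prefix (cword q) (cword v).
Proof.
case/posP => i [b [iv vb ->]]; rewrite prefixE size_rcons (size_takel (ltnW iv)) (take_nth b iv).
by rewrite eqseq_rcons eqxx eq_sym (negbTE vb).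
Qed.

Lemma pos_prefix_eq q1 q2 : q1 \in pos v p -> q2 \in pos v p ->
  prefix (cword q1) (cword q2) -> q1 = q2.
Proof.
move=> P1 /posP[i [b [iv _ E2]]] pre.
have [lt12 | le21] := ltnP (size (cword q1)) (size (cword q2)).
  have : prefix (cword q1) (cword v).
    apply: (@prefix_trans _ (take i (cword v))); last exact: prefix_take.
    move: pre lt12; rewrite E2 -cats1 !prefixE size_cat (size_takel (ltnW iv)) addn1 ltnS.
    by move=> pre le1; rewrite takel_cat ?(size_takel (ltnW iv)) in pre.
  by rewrite (negbTE (pos_not_prefix P1)).
by apply: cword_inj; move: pre; rewrite prefixE take_oversize // => /eqP.
Qed.

Lemma pos_prefix_inj q1 q2 x : q1 \in pos v p -> q2 \in pos v p ->
  prefix (cword q1) x -> prefix (cword q2) x -> q1 = q2.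
Proof.
wlog le12 : q1 q2 / size (cword q1) <= size (cword q2).
  move=> wlog P1 P2 X1 X2; have [le | /ltnW le] := leqP (size (cword q1)) (size (cword q2)).
    exact: wlog.
  exact/esym/wlog.
move=> P1 P2 X1 X2; apply: pos_prefix_eq => //.
move: X1 X2; rewrite !prefixE => /eqP E1 /eqP E2.
by rewrite -E2 take_takel // E1.
Qed.

Lemma size_pos q : q \in pos v p -> size (cword q) <= size (cword v).
Proof. by case/posP => i [b [iv _ ->]]; rewrite size_rcons (size_takel (ltnW iv)). Qed.

Lemma pos_height T u r : dcatalan T -> v \in T -> u \in pos v p ->
  inT T (cword u ++ r) -> size (cword v) + size r <= k.
Proof.
move=> dT vT /posP[i [b [iv vb Eu]]] Tur.
have Eur : cword u ++ r = take i (cword v) ++ b :: r by rewrite Eu cat_rcons.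
have := @branch_bound d k T (cword v) (cword u ++ r) i b dT.
rewrite inT_cword vT Tur Eur size_cat nth_cat (size_takel (ltnW iv)) ltnn subnn /=.
by rewrite addnS subSS addKn eq_sym vb => /(_ isT isT); apply; lia.
Qed.

End Positions.

Section Shuffles.
Variables (d k : nat) (v : code d k) (p : nat).
Implicit Types (T : {set code d k}) (c q : code d k) (x : seq 'I_d).

Lemma shuffledE T s q x : q \in pos v p -> prefix (cword q) x ->
  shuffled v p T s x = inT T (cword (s q) ++ drop (size (cword q)) x).
Proof.
move=> qP qx; rewrite /shuffled; case: pickP => [q' /andP[q'P q'x] | /(_ q)].
  by rewrite (pos_prefix_inj q'P qP q'x qx).
by rewrite /= qP qx.
Qed.

Lemma shuffled_off T s x : (forall q, q \in pos v p -> ~~ prefix (cword q) x) ->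
  shuffled v p T s x = inT T x.
Proof. by move=> off; rewrite /shuffled; case: pickP => // q /andP[/off/negbTE ->]. Qed.

Lemma shuffled_vertex T s : shuffled v p T s (cword v) = (v \in T).
Proof. by rewrite shuffled_off ?inT_cword // => q; apply: pos_not_prefix. Qed.

Lemma shuffled1 T x : shuffled v p T 1%g x = inT T x.
Proof.
rewrite /shuffled; case: pickP => // q /andP[_ /prefixP[r ->]].
by rewrite perm1 drop_size_cat.
Qed.

(* Composing rearrangements never creates a word longer than k, because
   pos_height bounds the words living below a sibling position. *)
Lemma shuffledM T' T s t : dcatalan T' -> v \in T' ->
  perm_on (pos v p) s -> perm_on (pos v p) t ->
  (forall c, (c \in T) = shuffled v p T' s (cword c)) ->
  forall c, shuffled v p T t (cword c) = shuffled v p T' (t * s) (cword c).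
Proof.
move=> dT' vT' s_on t_on ET c.
case: (pickP [pred q in pos v p | prefix (cword q) (cword c)]) => [q /andP[qP qc] | off].
  rewrite !(shuffledE _ _ qP qc) permM; set r := drop _ (cword c).
  have tqP : t q \in pos v p by rewrite (perm_closed _ t_on).
  have stqP : s (t q) \in pos v p by rewrite (perm_closed _ s_on).
  have [short | long] := leqP (size (cword (t q) ++ r)) k.
    rewrite -(code_of_wordK short) inT_cword ET code_of_wordK //.
    by rewrite (shuffledE _ _ tqP (prefix_prefix _ _)) drop_size_cat.
  rewrite inTE leqNgt long /=; apply/esym/negbTE/negP => T'str.
  have := pos_height dT' vT' stqP T'str; have := size_pos tqP.
  by move: long; rewrite size_cat; lia.
have {}off q : q \in pos v p -> ~~ prefix (cword q) (cword c).
  by move=> qP; apply/negP => qc; have := off q; rewrite /= qP qc.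
by rewrite !shuffled_off // inT_cword ET shuffled_off.
Qed.

Lemma ShP T T'' : T'' \in Sh T v p <-> dcatalan T'' /\
  exists2 s : {perm code d k}, perm_on (pos v p) s &
    forall c, (c \in T'') = shuffled v p T s (cword c).
Proof.
rewrite inE; split => [/andP[dT'' /existsP[s /andP[s_on /forallP E]]] | [dT'' [s s_on E]]].
  by split => //; exists s => // c; apply/eqP.
by rewrite dT''; apply/existsP; exists s; rewrite s_on; apply/forallP => c; rewrite E.
Qed.

Lemma Sh_refl T : dcatalan T -> T \in Sh T v p.
Proof.
by move=> dT; apply/ShP; split => //; exists 1%g => [|c]; rewrite ?perm_on1 ?shuffled1 ?inT_cword.
Qed.

Lemma Sh_eq T' T : dcatalan T' -> v \in T' -> T \in Sh T' v p -> Sh T v p = Sh T' v p.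
Proof.
move=> dT' vT' /ShP[dT [s s_on ET]]; apply/setP => T''.
apply/idP/idP => /ShP[dT'' [t t_on ET'']]; apply/ShP; split => //.
  exists (t * s)%g => [|c]; first exact: perm_onM.
  by rewrite ET'' (shuffledM dT' vT' s_on t_on ET).
have t_on' : perm_on (pos v p) (t * s^-1)%g by apply: perm_onM => //; apply: perm_onV.
by exists (t * s^-1)%g => // c; rewrite ET'' (shuffledM dT' vT' s_on t_on' ET) mulgKV.
Qed.

Lemma sum_classes_at T : dcatalan T ->
  \sum_(S in classes_at v p) (T \in S : nat) = (v \in T).
Proof.
move=> dT; have [vT | vNT] := boolP (v \in T).
  have ShT : Sh T v p \in classes_at v p by apply/imsetP; exists T; rewrite // inE dT vT.
  rewrite (bigD1 _ ShT) /= Sh_refl // big1 // => _ /andP[/imsetP[T0 + ->] neq].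
  rewrite inE => /andP[dT0 vT0]; apply/eqP; rewrite eqb0; apply: contra neq => TS.
  by rewrite (Sh_eq dT0 vT0 TS).
rewrite big1 // => _ /imsetP[T0 + ->]; rewrite inE => /andP[_ vT0].
apply/eqP; rewrite eqb0; apply: contra vNT => /ShP[_ [s _ ET]].
by rewrite ET shuffled_vertex.
Qed.

End Shuffles.

Local Open Scope ring_scope.

Lemma geometric_sum_natr (R : numFieldType) (n m : nat) : (1 < n)%N ->
  (n%:R ^+ m - 1) / (n%:R - 1) = (\sum_(j < m) n ^ j)%N%:R :> R.
Proof.
move=> n_gt1; have n_gt0 := ltnW n_gt1.
have -> : n%:R ^+ m - 1 = (n ^ m).-1%:R :> R by rewrite -natrX -subn1 natrB // expn_gt0 n_gt0.
have -> : n%:R - 1 = n.-1%:R :> R by rewrite -subn1 natrB.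
by rewrite predn_exp natrM mulrC mulKf // pnatr_eq0 -lt0n -ltnS prednK.
Qed.

Section Psi.
Variables (R : numFieldType) (d k p : nat).
Implicit Type T : {set code d k}.

Definition class_multiplicity (S : {set {set code d k}}) : nat :=
  #|[set v : code d k | (p <= size (cword v))%N & S \in classes_at v p]|.

Lemma psi_span T : psi R p T =
  \sum_(S in shuffle_classes d k p)
    (d * k + 1)%N%:R^-1 * (class_multiplicity S)%:R * (T \in S)%:R.
Proof.
rewrite /psi (exchange_big_dep (mem (shuffle_classes d k p))) /=; last first.
  by move=> v S pv Sv; apply/bigcupP; exists v.
rewrite mulr_sumr; apply: eq_bigr => S _; rewrite -mulrA; congr (_ * _).
rewrite /class_multiplicity -sum1dep_card natr_sum mulr_suml.
by apply: eq_bigr => v _; rewrite mul1r.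
Qed.

Lemma psiE T : dcatalan T ->
  psi R p T = #|[set v in T | (p <= size (cword v))%N]|%:R / (d * k + 1)%N%:R.
Proof.
move=> dT; rewrite /psi mulrC; congr (_ * _).
under eq_bigr do rewrite -natr_sum sum_classes_at //.
rewrite -natr_sum -big_mkcondr sum1dep_card; congr _%:R.
by apply: eq_card => v; rewrite !inE andbC.
Qed.

Lemma psi_deficit T : dcatalan T ->
  1 - psi R p T = #|[set v in T | (size (cword v) < p)%N]|%:R / (d * k + 1)%N%:R.
Proof.
move=> dT; rewrite psiE // -(card_dcatalan_split p dT) natrD.
set a : R := #|_|%:R; set b : R := #|_|%:R.
have ab_neq0 : a + b != 0 by rewrite -natrD pnatr_eq0 (card_dcatalan_split p dT) addn1.
by apply: (mulIf ab_neq0); rewrite mulrBl mul1r !divfK // addrAC subrr add0r.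
Qed.

End Psi.

Theorem proposition6p1 (R : realFieldType) (d p k : nat) :
  (2 <= d)%N -> (1 <= p)%N -> (1 <= k)%N ->
  (exists c : {set {set code d k}} -> R,
     forall T : {set code d k}, dcatalan T ->
       psi R p T = \sum_(S in shuffle_classes d k p) c S * (T \in S)%:R)
  /\ (forall T : {set code d k}, dcatalan T ->
       `|psi R p T - 1| <=
         ((d%:R ^+ p - 1) / (d%:R - 1)) / (d * k + 1)%N%:R).
Proof.
move=> d_gt1 _ _; split.
  by exists (fun S => (d * k + 1)%N%:R^-1 * (class_multiplicity p S)%:R) => T _; apply: psi_span.
move=> T dT; rewrite geometric_sum_natr // -normrN opprB psi_deficit //.
rewrite ger0_norm ?divr_ge0 // ler_pM2r ?invr_gt0 ?ltr0n ?addn1 // ler_nat.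
apply: leq_trans (card_short_codes k (ltnW d_gt1) p); apply: subset_leq_card.
by apply/subsetP => v; rewrite !inE => /andP[].
Qed.
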